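(* Let $A$ be an invertible square rational matrix. Then $A$ is totally equimodular if and only if $(A^{-1})^\top$ is totally equimodular.
   Context: An $m\times n$ matrix is equimodular if it has full row rank $m$ and all its nonzero $m\times m$ minors have the same absolute value. A matrix is totally equimodular if every set of linearly independent rows of it forms an equimodular matrix. *)

From mathcomp Require Import all_boot all_order all_algebra.
Set Implicit Arguments. Unset Strict Implicit. Unset Printing Implicit Defensive.
Import Order.TTheory GRing.Theory Num.Theory.
Local Open Scope ring_scope.

(* An m x m minor is
   the determinant of the submatrix formed by m columns (selected by
   f : 'I_m -> 'I_n; a non-injective f gives a zero minor, which the
   condition ignores anyway). *)
Definition equimodular (m n : nat) (A : 'M[rat]_(m, n)) : Prop :=
  \rank A = m /\
  forall f g : 'I_m -> 'I_n,
    \det (colsub f A) != 0 -> \det (colsub g A) != 0 ->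
    `|\det (colsub f A)| = `|\det (colsub g A)|.

Definition totally_equimodular (m n : nat) (A : 'M[rat]_(m, n)) : Prop :=
  forall (k : nat) (r : 'I_k -> 'I_m), injective r ->
    row_free (rowsub r A) -> equimodular (rowsub r A).

From mathcomp Require Import all_boot all_order all_algebra.
From mathcomp Require Import perm.
Import Order.TTheory GRing.Theory Num.Theory.
Set Implicit Arguments. Unset Strict Implicit.
Local Open Scope ring_scope.

(* By Jacobi's complementary minor identity, the minor of (A^-1)^T on rows R
   and columns C equals, up to sign and the factor 1 / det A, the minor of A on
   the complementary rows and columns.  All row subsets of an invertible matrix
   are independent, so the nonzero maximal minors of the rows R of (A^-1)^T are
   |det A|^-1 times those of the complementary rows of A: one family has
   constant absolute value iff the other does.  Since A |-> (A^-1)^T is an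
   involution, one implication suffices. *)

Definition catf k m T (f : 'I_k -> T) (f' : 'I_m -> T) (x : 'I_(k + m)) : T :=
  match split x with inl i => f i | inr j => f' j end.

Lemma catf_lshift k m T (f : 'I_k -> T) (f' : 'I_m -> T) i :
  catf f f' (lshift m i) = f i.
Proof. by rewrite /catf (unsplitK (inl _ i)). Qed.

Lemma catf_rshift k m T (f : 'I_k -> T) (f' : 'I_m -> T) i :
  catf f f' (rshift k i) = f' i.
Proof. by rewrite /catf (unsplitK (inr _ i)). Qed.

Lemma catf_inj k m (T : eqType) (f : 'I_k -> T) (f' : 'I_m -> T) :
  injective f -> injective f' -> (forall i j, f i != f' j) ->
  injective (catf f f').
Proof.
move=> f_inj f'_inj ff' x y; rewrite /catf => e.
apply: (can_inj splitK); move: e.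
case: (split x) => [i|i]; case: (split y) => [j|j] e.
- by rewrite (f_inj _ _ e).
- by move/eqP: (ff' i j); rewrite e.
- by move/eqP: (ff' j i); rewrite e.
- by rewrite (f'_inj _ _ e).
Qed.

Lemma catf_injr k m T (f : 'I_k -> T) (f' : 'I_m -> T) :
  injective (catf f f') -> injective f'.
Proof.
move=> ff'_inj i j eq_ij; apply: (@rshift_inj k); apply: ff'_inj.
by rewrite !catf_rshift.
Qed.

Lemma exists_catf_inj k n (r : 'I_k -> 'I_n) : injective r ->
  exists r' : 'I_(n - k) -> 'I_n, injective (catf r r').
Proof.
move=> r_inj; pose S := [set x | x \notin codom r].
have cardS : (n - k)%N = #|S|.
  have := cardC (mem (codom r)); rewrite card_codom // !card_ord => cardCr.
  by rewrite -{1}cardCr addKn; apply: eq_card => x; rewrite !inE.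
exists (fun i => enum_val (cast_ord cardS i)); apply: catf_inj => //.
  by move=> i j /enum_val_inj /cast_ord_inj.
move=> i j; have := enum_valP (cast_ord cardS j); rewrite inE.
by apply: contra => /eqP <-; exact: codom_f.
Qed.

Section RingMinors.
Variable R : pzRingType.

Lemma mxsub1_inj m n (f : 'I_m -> 'I_n) : injective f ->
  mxsub f f (1%:M : 'M[R]_n) = 1%:M.
Proof. by move=> f_inj; apply/matrixP => i j; rewrite !mxE (inj_eq f_inj). Qed.

Lemma mul_mxsub_inv n (A B : 'M[R]_n) (r f : 'I_n -> 'I_n) :
  A *m B = 1%:M -> injective r -> injective f ->
  mxsub r f A *m mxsub f r B = 1%:M.
Proof.
move=> AB r_inj f_inj.
have -> : mxsub r f A *m mxsub f r B
          = mxsub r r (col_perm (perm f_inj) A *m row_perm (perm f_inj) B).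
  rewrite mxsub_mul col_permEsub row_permEsub -!mxsub_comp.
  by congr (_ *m _); apply: eq_mxsub => i; rewrite /= ?permE.
by rewrite mul_col_perm -row_permM mulVg row_perm1 AB mxsub1_inj.
Qed.
End RingMinors.

Section ComRingMinors.
Variable R : comPzRingType.

Lemma det_mul_ulsubmx k m (M N : 'M[R]_(k + m)) :
  M *m N = 1%:M -> \det M * \det (ulsubmx N) = \det (drsubmx M).
Proof.
move=> MN.
have MN_lblock : M *m block_mx (ulsubmx N) 0 (dlsubmx N) 1%:M
                 = block_mx 1%:M (ursubmx M) 0 (drsubmx M).
  move: MN; rewrite -[M in M *m N]submxK -[N in _ *m N]submxK mulmx_block.
  rewrite (scalar_mx_block k m 1) => /eq_block_mx [ul_1 _ dl_0 _].
  by rewrite -[M in LHS]submxK mulmx_block ul_1 dl_0 !mulmx0 !add0r !mulmx1.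
move/(congr1 determinant): MN_lblock.
by rewrite det_mulmx det_lblock det_ublock !det1 mulr1 mul1r.
Qed.

Lemma det_colsub_inj k n (X : 'M[R]_(k, n)) (f : 'I_k -> 'I_n) :
  \det (colsub f X) != 0 -> injective f.
Proof.
move=> detX i j fij; apply/eqP; apply: contraNT detX => neq_ij; apply/eqP.
by rewrite -det_tr; apply: (determinant_alternate neq_ij) => l; rewrite !mxE fij.
Qed.
End ComRingMinors.

Section NumMinors.
Variable R : numDomainType.

Lemma normr_det_mxsub_inj n (A : 'M[R]_n) (r f : 'I_n -> 'I_n) :
  injective r -> injective f -> `|\det (mxsub r f A)| = `|\det A|.
Proof.
move=> r_inj f_inj.
have -> : mxsub r f A = row_perm (perm r_inj) (col_perm (perm f_inj) A).
  by apply/matrixP => i j; rewrite !mxE !permE.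
by rewrite row_permE col_permE !det_mulmx !det_perm !normrM !normr_sign mul1r mulr1.
Qed.

(* With [k + m = n], injectivity of [catf r r'] says that [r'] enumerates the
   complement of the image of [r]. *)
Lemma jacobi_minor_norm n k m (A B : 'M[R]_n) (e : (k + m)%N = n)
    (r f : 'I_k -> 'I_n) (r' f' : 'I_m -> 'I_n) :
  A *m B = 1%:M -> injective (catf r r') -> injective (catf f f') ->
  `|\det A| * `|\det (mxsub f r B)| = `|\det (mxsub r' f' A)|.
Proof.
move=> AB rr'_inj ff'_inj; subst n.
have := det_mul_ulsubmx (mul_mxsub_inv AB rr'_inj ff'_inj).
have -> : ulsubmx (mxsub (catf f f') (catf r r') B) = mxsub f r B.
  by apply/matrixP => i j; rewrite !mxE !catf_lshift.
have -> : drsubmx (mxsub (catf r r') (catf f f') A) = mxsub r' f' A.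
  by apply/matrixP => i j; rewrite !mxE !catf_rshift.
by move=> <-; rewrite normrM normr_det_mxsub_inj.
Qed.
End NumMinors.

Lemma row_free_rowsub_unit (F : fieldType) n k (A : 'M[F]_n) (r : 'I_k -> 'I_n) :
  A \in unitmx -> injective r -> row_free (rowsub r A).
Proof.
move=> A_unit r_inj; apply/row_freeP; exists (invmx A *m colsub r 1%:M).
by rewrite mul_rowsub_mx mulmxA mulmxV // mul1mx -mxsub_comp mxsub1_inj.
Qed.

Lemma totally_equimodular_inv_tr n (A : 'M[rat]_n) : A \in unitmx ->
  totally_equimodular A -> totally_equimodular (invmx A)^T.
Proof.
move=> A_unit A_TE k r r_inj _.
have invAt_unit : (invmx A)^T \in unitmx by rewrite unitmx_tr unitmx_inv.
split; first exact/eqP/(row_free_rowsub_unit invAt_unit).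
have le_kn : (k <= n)%N by have := leq_card r r_inj; rewrite !card_ord.
have e : (k + (n - k))%N = n by rewrite subnKC.
have [r' rr'_inj] := exists_catf_inj r_inj.
have detA_neq0 : `|\det A| != 0 by rewrite normr_eq0 -unitfE -unitmxE.
have [_ A_r'_minors] := A_TE _ r' (catf_injr rr'_inj)
  (row_free_rowsub_unit A_unit (catf_injr rr'_inj)).
have compl_minor f : \det (colsub f (rowsub r (invmx A)^T)) != 0 ->
    exists f' : 'I_(n - k) -> 'I_n,
    `|\det A| * `|\det (colsub f (rowsub r (invmx A)^T))|
      = `|\det (colsub f' (rowsub r' A))|.
  move=> /det_colsub_inj f_inj; have [f' ff'_inj] := exists_catf_inj f_inj.
  exists f'; rewrite -[\det (colsub f _)]det_tr -[colsub f' _]mxsub_comp.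
  apply: etrans _ (jacobi_minor_norm e (mulmxV A_unit) rr'_inj ff'_inj).
  by congr (_ * `|\det _|); apply/matrixP => i j; rewrite !mxE.
move=> f g Bf Bg; have [f' Ef] := compl_minor f Bf; have [g' Eg] := compl_minor g Bg.
apply: (mulfI detA_neq0); rewrite Ef Eg; apply: A_r'_minors.
  by rewrite -normr_eq0 -Ef mulf_neq0 // normr_eq0.
by rewrite -normr_eq0 -Eg mulf_neq0 // normr_eq0.
Qed.

Theorem mainTheorem2 (n : nat) (A : 'M[rat]_n) :
  A \in unitmx ->
  (totally_equimodular A <-> totally_equimodular (invmx A)^T).
Proof.
move=> A_unit; split; first exact: totally_equimodular_inv_tr.
have invAt_unit : (invmx A)^T \in unitmx by rewrite unitmx_tr unitmx_inv.
by move/(totally_equimodular_inv_tr invAt_unit); rewrite trmx_inv trmxK invmxK.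
Qed.
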